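(* Let $d\ge 3$. An $\mathcal L_d$-structure $\mathcal M$ with domain $\mathbb M$ is a model of $\mathrm{PQM}_d$ if and only if there exists a strong $\mathcal L_d$-morphism $\kappa:\mathbb M\to\mathbb H_d$ from $\mathcal M$ to $\mathcal H_d$ such that $\kappa(\mathbb M)\ne\{\bot\}$.
   Context: Notation. For $d\ge 1$, $\mathbb H_d$ is the set of complex linear subspaces of $\mathbb C^d$, ordered by inclusion $\le$, with $\top=\mathbb C^d$, $\bot=\{0\}$, $p^\bot$ the orthogonal complement, $p\wedge q=p\cap q$ and $p\vee q=p+q$. $\mathbb U_d$ is the set of unitary operators on $\mathbb C^d$, and for $U\in\mathbb U_d$, $p\in\mathbb H_d$, $U(p)=\{Uv: v\in p\}$. The Sasaki projection is $p\,\&\,q := q\cap(q^\bot+p)$. Subspaces $p,q$ are compatible iff $p=(p\wedge q)\vee(p\wedge q^\bot)$. Language $\mathcal L_d$: a first-order language without equality and without constants, having a unary function symbol $u_U$ for each $U\in\mathbb U_d$, a unary function symbol $\pi_q$ for each $q\in\mathbb H_d$, and a unary relation symbol $[\,\cdot:p]$ for each $p\in\mathbb H_d$. Theory $\mathrm{PQM}_d$ (over $\mathcal L_d$) has the following axioms, for all $p,q\in\mathbb H_d$ and $U\in\mathbb U_d$: ($\neg\bot$) $\exists x\,\neg[x:\bot]$; ($\top$) $\forall x\,[x:\top]$; ($\le$) if $p\le q$: $\forall x\,([x:p]\to[x:q])$; ($\wedge$) if $p,q$ are compatible: $\forall x\,([x:p]\wedge[x:q]\to[x:p\wedge q])$;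 ($\pi_i$) $\forall x\,([x:p]\to[\pi_q(x):p\,\&\,q])$; ($\pi_c$) if $p\le q$: $\forall x\,([\pi_p(\pi_q(x)):\bot]\to[\pi_p(x):\bot])$; ($\pi_\bot$) $\forall x\,([\pi_q(x):\bot]\to[x:q^\bot])$; ($u_i$) $\forall x\,([x:p]\to[u_U(x):U(p)])$; ($u_e$) $\forall x\,([u_U(x):p]\to[x:U^{-1}(p)])$. Hilbert model $\mathcal H_d$: the $\mathcal L_d$-structure with domain $\mathbb H_d$, $u_U^{\mathcal H_d}(x)=U(x)$, $\pi_q^{\mathcal H_d}(x)=x\,\&\,q$, and $[x:p]^{\mathcal H_d}$ holds iff $x\le p$. Strong $\mathcal L_d$-morphism: a map $\kappa:\mathbb M\to\mathbb H_d$ such that for all $m\in\mathbb M$: $[m:p]^{\mathcal M}\iff\kappa(m)\le p$ for every $p\in\mathbb H_d$; $\kappa(\pi_q^{\mathcal M}(m))=\kappa(m)\,\&\,q$ for every $q\in\mathbb H_d$; and $\kappa(u_U^{\mathcal M}(m))=U(\kappa(m))$ for every $U\in\mathbb U_d$. *)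

From HB Require Import structures.
From mathcomp Require Import all_boot all_order all_algebra.
From mathcomp Require Import complex.
From mathcomp Require Import reals Rstruct.
Set Implicit Arguments. Unset Strict Implicit. Unset Printing Implicit Defensive.
Import Order.TTheory GRing.Theory Num.Theory.
Local Open Scope ring_scope.

Definition C : numClosedFieldType := (Rdefinitions.R)[i].

(* Conjugate transpose (vectors of C^d are row vectors 'rV[C]_d;
   the Hermitian inner product is <u,v> = u *m (v^* )^T). *)
Definition adjmx (m n : nat) (A : 'M[C]_(m, n)) : 'M[C]_(n, m) :=
  (map_mx Num.conj A)^T.

(* H_d: complex linear subspaces of C^d, represented by the canonical
   square matrix generating them (row space), i.e. A with <<A>> = A. *)
Definition subsp (d : nat) := {A : 'M[C]_d | genmx A == A}.

Lemma genmx_canon (d : nat) (A : 'M[C]_d) : genmx (genmx A) == genmx A.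
Proof. by rewrite genmx_id. Qed.

Definition span (d : nat) (A : 'M[C]_d) : subsp d :=
  exist _ (genmx A) (genmx_canon A).

Definition sle (d : nat) (p q : subsp d) : Prop := (val p <= val q)%MS.
Definition sbot (d : nat) : subsp d := span 0.
Definition stop (d : nat) : subsp d := span 1%:M.
Definition smeet (d : nat) (p q : subsp d) : subsp d := span (val p :&: val q)%MS.
Definition sjoin (d : nat) (p q : subsp d) : subsp d := span (val p + val q)%MS.
Definition sorth (d : nat) (p : subsp d) : subsp d := span (kermx (adjmx (val p))).

Definition sasaki (d : nat) (p q : subsp d) : subsp d :=
  smeet q (sjoin (sorth q) p).

Definition compatible (d : nat) (p q : subsp d) : Prop :=
  p = sjoin (smeet p q) (smeet p (sorth q)).

Definition unitary (d : nat) := {U : 'M[C]_d | U *m adjmx U == 1%:M}.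

(* U(p) = { U v : v in p }; U acts on column vectors v, so on the row
   vector v^T it acts as v^T |-> v^T *m U^T. *)
Definition uimg (d : nat) (U : unitary d) (p : subsp d) : subsp d :=
  span (val p *m (val U)^T).

Definition uinvimg (d : nat) (U : unitary d) (p : subsp d) : subsp d :=
  span (val p *m (invmx (val U))^T).

Local Close Scope ring_scope.

(* An L_d-structure: a nonempty domain with interpretations of the
   function symbols u_U (U in U_d), pi_q (q in H_d) and of the relation
   symbols [ . : p ] (p in H_d).  rel M p x  means  [x : p]. *)
Record Lstruct (d : nat) := LStruct {
  dom :> Type;
  dom_inhabited : inhabited dom;
  u_sym : unitary d -> dom -> dom;
  pi_sym : subsp d -> dom -> dom;
  rel : subsp d -> dom -> Prop }.
Arguments u_sym {d} M U x : rename.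
Arguments pi_sym {d} M q x : rename.
Arguments rel {d} M p x : rename.

Definition PQM_model (d : nat) (M : Lstruct d) : Prop :=
  (exists x : M, ~ rel M (sbot d) x) /\
  (forall x : M, rel M (stop d) x) /\
  (forall p q, sle p q -> forall x : M, rel M p x -> rel M q x) /\
  (forall p q, compatible p q ->
                     forall x : M, rel M p x /\ rel M q x -> rel M (smeet p q) x) /\
  (forall p q (x : M), rel M p x -> rel M (sasaki p q) (pi_sym M q x)) /\
  (forall p q, sle p q -> forall x : M,
                     rel M (sbot d) (pi_sym M p (pi_sym M q x)) ->
                     rel M (sbot d) (pi_sym M p x)) /\
  (forall q (x : M), rel M (sbot d) (pi_sym M q x) -> rel M (sorth q) x) /\
  (forall p U (x : M), rel M p x -> rel M (uimg U p) (u_sym M U x)) /\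
  (forall p U (x : M), rel M p (u_sym M U x) -> rel M (uinvimg U p) x).

Definition strong_morphism (d : nat) (M : Lstruct d) (kappa : M -> subsp d) : Prop :=
  forall m : M,
    (forall p, rel M p m <-> sle (kappa m) p) /\
    (forall q, kappa (pi_sym M q m) = sasaki (kappa m) q) /\
    (forall U, kappa (u_sym M U m) = uimg U (kappa m)).

(* For a strong morphism kappa every axiom of PQM_d is a fact about the lattice
   of subspaces, Sasaki projections and unitary images, and the image of kappa is
   not {bot} exactly when (not bot) holds.

   Conversely, in a model the subspaces p with [x : p] form, for each x, a family
   closed upwards, under compatible meets and under Sasaki projection.  Let a be
   such a subspace of minimal rank and c any other one.  If a is not below c, pick
   a line v in a orthogonal to a /\ c and put q = v \/ a^⊥.  Then y = pi_q(x)
   satisfies the line v and the subspace c & q, which does not contain v.  For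
   d >= 3 such a family containing two distinct lines contains bot: rotating the
   lines through compatible meets inside three-dimensional frames brings their
   angle to 90 degrees in finitely many steps.  So [y : bot], hence [x : q^⊥] by
   (pi_bot), although q^⊥ has smaller rank than a.  Thus a is the least subspace
   satisfied by x, and kappa(x) := a is a strong morphism. *)

From HB Require Import structures.
From mathcomp Require Import all_boot all_order all_algebra.
From mathcomp Require Import complex reals Rstruct.
From mathcomp Require Import ring lra zify.
From Stdlib Require Import Classical ClassicalEpsilon.
Set Implicit Arguments. Unset Strict Implicit. Unset Printing Implicit Defensive.
Import Order.TTheory GRing.Theory Num.Theory.
Local Open Scope ring_scope.

Local Notation "A ^⊥" := (kermx (adjmx A)) (at level 8, format "A ^⊥").

Section Adjoint.
Variables m n p : nat.
Implicit Types A B : 'M[C]_(m, n).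

Lemma adjmxM A (B : 'M[C]_(n, p)) : adjmx (A *m B) = adjmx B *m adjmx A.
Proof. by rewrite /adjmx map_mxM trmx_mul. Qed.

Lemma adjmxK A : adjmx (adjmx A) = A.
Proof. by apply/matrixP=> i j; rewrite !mxE conjCK. Qed.

Lemma adjmxD A B : adjmx (A + B) = adjmx A + adjmx B.
Proof. by apply/matrixP=> i j; rewrite !mxE rmorphD. Qed.

Lemma adjmxZ (a : C) A : adjmx (a *: A) = a^* *: adjmx A.
Proof. by apply/matrixP=> i j; rewrite !mxE rmorphM. Qed.

Lemma adjmx_eq0 A : (adjmx A == 0) = (A == 0).
Proof. by rewrite trmx_eq0 map_mx_eq0. Qed.

Lemma mxrank_adj A : \rank (adjmx A) = \rank A.
Proof. by rewrite mxrank_tr mxrank_map. Qed.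

Lemma adjmx_col_mx A (B : 'M[C]_(p, n)) :
  adjmx (col_mx A B) = row_mx (adjmx A) (adjmx B).
Proof. by rewrite /adjmx map_col_mx tr_col_mx. Qed.

(* The diagonal entries of [A *m adjmx A] are the squared norms of the rows. *)
Lemma mulmx_adj_eq0 A : A *m adjmx A = 0 -> A = 0.
Proof.
move=> AA0; apply/matrixP=> i j; rewrite mxE.
have /(congr1 (fun M : 'M[C]_m => M i i)) := AA0; rewrite !mxE => sum0.
apply/eqP; rewrite -normr_eq0 -sqrf_eq0 normCK; apply/eqP.
apply: (@psumr_eq0P _ _ xpredT (fun k => A i k * (A i k)^*)) => // [k _|].
  exact: mul_conjC_ge0.
by rewrite -[RHS]sum0; apply: eq_bigr => k _; rewrite !mxE.
Qed.

End Adjoint.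

Section OrthogonalComplement.
Variable d : nat.

Lemma orthmx_sym m n (A : 'M[C]_(m, d)) (B : 'M[C]_(n, d)) :
  (A <= B^⊥)%MS = (B <= A^⊥)%MS.
Proof. by rewrite !sub_kermx -adjmx_eq0 adjmxM adjmxK. Qed.

Lemma submx_orthmxK m (A : 'M[C]_(m, d)) : (A <= A^⊥^⊥)%MS.
Proof. by rewrite orthmx_sym. Qed.

Lemma orthmxS m n (A : 'M[C]_(m, d)) (B : 'M[C]_(n, d)) :
  (A <= B)%MS -> (B^⊥ <= A^⊥)%MS.
Proof. by move=> sAB; rewrite orthmx_sym (submx_trans sAB) ?submx_orthmxK. Qed.

Lemma eqmx_orthmx m n (A : 'M[C]_(m, d)) (B : 'M[C]_(n, d)) :
  (A :=: B)%MS -> (A^⊥ :=: B^⊥)%MS.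
Proof. by move=> eAB; apply/eqmxP/andP; split; apply: orthmxS; rewrite eAB. Qed.

Lemma orthmx_self_eq0 m (A : 'M[C]_(m, d)) : (A <= A^⊥)%MS -> A = 0.
Proof. by rewrite sub_kermx => /eqP; apply: mulmx_adj_eq0. Qed.

Lemma capmx_orth m n (A : 'M[C]_(m, d)) (B : 'M[C]_(n, d)) :
  (B <= A^⊥)%MS -> (A :&: B)%MS = 0.
Proof.
move=> sBA; apply: orthmx_self_eq0; apply: submx_trans (capmxSr A B) _.
exact: submx_trans sBA (orthmxS (capmxSl A B)).
Qed.

Lemma capmx_orthmx m (A : 'M[C]_(m, d)) : (A :&: A^⊥)%MS = 0.
Proof. exact: capmx_orth. Qed.

Lemma mxrank_orthmx m (A : 'M[C]_(m, d)) : \rank A^⊥ = (d - \rank A)%N.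
Proof. by rewrite mxrank_ker mxrank_adj. Qed.

Lemma addsmx_orthmx_full m (A : 'M[C]_(m, d)) : (1%:M <= A + A^⊥)%MS.
Proof.
rewrite sub1mx /row_full mxrank_disjoint_sum ?capmx_orthmx // mxrank_orthmx.
by rewrite subnKC ?rank_leq_col.
Qed.

Lemma orthmxK m (A : 'M[C]_(m, d)) : (A^⊥^⊥ :=: A)%MS.
Proof.
apply/eqmxP; have sA := submx_orthmxK A; rewrite sA andbT.
have /leqifP := mxrank_leqif_sup sA; rewrite !mxrank_orthmx subKn ?rank_leq_col //.
by case: ifP => // _; rewrite ltnn.
Qed.

Lemma capmx_adds_orthmx m n (A : 'M[C]_(m, d)) (B : 'M[C]_(n, d)) :
  (B <= A)%MS -> ((B + A^⊥) :&: A :=: B)%MS.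
Proof.
move=> sBA; apply: eqmx_trans (eqmx_sym (matrix_modl _ sBA)) _.
by rewrite capmxC capmx_orthmx; apply: addsmx0.
Qed.

Lemma adds_capmx_orthmx m n (S : 'M[C]_(m, d)) (Q : 'M[C]_(n, d)) :
  (S <= Q)%MS -> (S + (S^⊥ :&: Q) :=: Q)%MS.
Proof.
move=> sSQ; apply: eqmx_trans (matrix_modl _ sSQ) _.
apply/eqmxP; rewrite capmxSr sub_capmx submx_refl.
by rewrite (submx_trans (submx1 _)) ?addsmx_orthmx_full.
Qed.

Lemma sasaki_adds_orthmx m n (Q : 'M[C]_(m, d)) (K : 'M[C]_(n, d)) :
  (Q :&: (Q^⊥ + K) + Q^⊥ :=: Q^⊥ + K)%MS.
Proof.
rewrite (capmxC Q); apply: eqmx_trans (matrix_modr Q (addsmxSl Q^⊥ K)) _.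
apply/eqmxP; rewrite capmxSl sub_capmx submx_refl /=.
exact: submx_trans (submx1 _) (addsmx_orthmx_full Q).
Qed.

Lemma mxrank_sasaki m n (Q : 'M[C]_(m, d)) (K : 'M[C]_(n, d)) :
  (\rank (Q :&: (Q^⊥ + K)) <= \rank K)%N.
Proof.
have disj : ((Q :&: (Q^⊥ + K)) :&: Q^⊥)%MS = 0.
  exact/capmx_orth/orthmxS/capmxSl.
have := mxrank_adds_leqif Q^⊥ K; rewrite -(sasaki_adds_orthmx Q K).
rewrite mxrank_disjoint_sum // => /leqifP; case: ifP => _; lia.
Qed.

End OrthogonalComplement.

Lemma exists_orth_line d m n (A : 'M[C]_(m, d)) (B : 'M[C]_(n, d)) :
  ~~ (A <= B)%MS ->
  exists v : 'rV[C]_d, [/\ (v <= A)%MS, (v <= (A :&: B)^⊥)%MS & v != 0].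
Proof.
move=> AB; set W := ((A :&: B)^⊥ :&: A)%MS.
exists (nz_row W); split; last 1 first.
- rewrite nz_row_eq0; apply: contra AB => /eqP W0.
  rewrite -(adds_capmx_orthmx (capmxSl A B)) -/W W0 addsmx0; exact: capmxSr.
- exact: submx_trans (nz_row_sub W) (capmxSr _ _).
- exact: submx_trans (nz_row_sub W) (capmxSl _ _).
Qed.

(* The hypotheses on [Q] say that [Q :=: v + A^⊥]. *)
Section OrthLine.
Variables (d m n k : nat) (A : 'M[C]_(m, d)) (B : 'M[C]_(n, d)) (Q : 'M[C]_(k, d)).
Variable v : 'rV[C]_d.
Hypotheses (vA : (v <= A)%MS) (v_orth : (v <= (A :&: B)^⊥)%MS) (v0 : v != 0).
Hypotheses (vQ : (v <= Q)%MS) (AQ : (A^⊥ <= Q)%MS) (Q_vA : (Q <= v + A^⊥)%MS).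

Lemma orthmxQ_sub : (Q^⊥ <= A)%MS.
Proof. by apply: submx_trans (orthmxS AQ) _; rewrite orthmxK. Qed.

Lemma line_notin_orthmxQ : ~~ (v <= Q^⊥)%MS.
Proof.
by apply: contra v0 => vQ'; apply/eqP/orthmx_self_eq0/(submx_trans vQ')/orthmxS.
Qed.

Lemma mxrank_orthmxQ_lt : (\rank Q^⊥ < \rank A)%N.
Proof.
rewrite ltn_neqAle (mxrank_leqif_sup orthmxQ_sub).2 mxrankS ?orthmxQ_sub // andbT.
by apply: contra line_notin_orthmxQ => /(submx_trans vA).
Qed.

Lemma sasaki_sub_line : (Q :&: (Q^⊥ + A) <= v)%MS.
Proof.
have QA : (Q^⊥ + A <= A)%MS by rewrite addsmx_sub orthmxQ_sub submx_refl.
apply: submx_trans (capmxS Q_vA QA) _.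
by rewrite (capmx_adds_orthmx vA).
Qed.

Lemma line_notin_sasaki : ~~ (v <= Q :&: (Q^⊥ + B))%MS.
Proof.
apply/negP; rewrite sub_capmx => /andP[_ vQB].
have : (v <= (Q^⊥ + B) :&: A)%MS by rewrite sub_capmx vQB.
rewrite -(matrix_modl _ orthmxQ_sub) => vQBA.
move/negP: v0; apply; apply/eqP/orthmx_self_eq0/(submx_trans vQBA).
by rewrite addsmx_sub (orthmxS vQ) capmxC orthmx_sym.
Qed.

End OrthLine.

Definition mxspan (d m : nat) (A : 'M[C]_(m, d)) : subsp d :=
  exist _ (genmx A) (introT eqP (genmx_id A)).

Section Subspaces.
Variable d : nat.
Implicit Types p q r s : subsp d.

Lemma val_mxspan m (A : 'M[C]_(m, d)) : (val (mxspan A) :=: A)%MS.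
Proof. exact: genmxE. Qed.

Lemma subsp_eqmx p q : (val p :=: val q)%MS -> p = q.
Proof.
by move=> e; apply: val_inj; rewrite -(eqP (valP p)) -(eqP (valP q)); apply/genmxP/eqmxP.
Qed.

Lemma val_sorth p : (val (sorth p) :=: (val p)^⊥)%MS.
Proof. exact: genmxE. Qed.

Lemma val_smeet p q : (val (smeet p q) :=: val p :&: val q)%MS.
Proof. exact: genmxE. Qed.

Lemma val_sjoin p q : (val (sjoin p q) :=: val p + val q)%MS.
Proof. exact: genmxE. Qed.

Lemma val_sasaki p q : (val (sasaki p q) :=: val q :&: ((val q)^⊥ + val p))%MS.
Proof.
apply: eqmx_trans (val_smeet _ _) (cap_eqmx (eqmx_refl _) _).
exact: eqmx_trans (val_sjoin _ _) (adds_eqmx (val_sorth q) (eqmx_refl _)).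
Qed.

Lemma val_sbot : val (sbot d) = 0.
Proof. exact: genmx0. Qed.

Lemma mxspan0 m : mxspan (0 : 'M[C]_(m, d)) = sbot d.
Proof. by apply: val_inj; rewrite val_sbot /= genmx0. Qed.

Lemma val_stop : (val (stop d) :=: 1%:M)%MS.
Proof. exact: genmxE. Qed.

Lemma sle_refl p : sle p p.
Proof. exact: submx_refl. Qed.

Lemma sle_trans p q r : sle p q -> sle q r -> sle p r.
Proof. exact: submx_trans. Qed.

Lemma sle_antisym p q : sle p q -> sle q p -> p = q.
Proof. by move=> pq qp; apply/subsp_eqmx/eqmxP; rewrite /sle in pq qp; rewrite pq qp. Qed.

Lemma sle_top p : sle p (stop d).
Proof. by rewrite /sle val_stop submx1. Qed.

Lemma sle_bot p : sle p (sbot d) <-> p = sbot d.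
Proof.
rewrite /sle val_sbot submx0; split=> [/eqP p0 | ->]; last by rewrite val_sbot.
by apply: val_inj; rewrite p0 val_sbot.
Qed.

Lemma sle_smeet p q r : sle r p -> sle r q -> sle r (smeet p q).
Proof. by rewrite /sle val_smeet sub_capmx => -> ->. Qed.

Lemma sorthK p : sorth (sorth p) = p.
Proof.
apply/subsp_eqmx/(eqmx_trans (val_sorth _)).
exact: eqmx_trans (eqmx_orthmx (val_sorth p)) (orthmxK _).
Qed.

Lemma sorth_anti p q : sle p q -> sle (sorth q) (sorth p).
Proof. by rewrite /sle !val_sorth; apply: orthmxS. Qed.

Lemma sasaki_le p q : sle (sasaki p q) q.
Proof. by rewrite /sle val_sasaki capmxSl. Qed.

Lemma sasaki_mono p p' q : sle p p' -> sle (sasaki p q) (sasaki p' q).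
Proof. by rewrite /sle !val_sasaki => pp'; rewrite capmxS ?addsmxS. Qed.

Lemma sasaki_id p q : sle p q -> sasaki p q = p.
Proof.
move=> pq; apply/subsp_eqmx/(eqmx_trans (val_sasaki p q)).
by rewrite capmxC addsmxC; apply: capmx_adds_orthmx.
Qed.

Lemma sasaki_top q : sasaki (stop d) q = q.
Proof.
apply: sle_antisym (sasaki_le _ _) _.
rewrite /sle val_sasaki sub_capmx submx_refl /=.
apply: submx_trans (submx1 _) (submx_trans _ (addsmxSr _ _)).
by rewrite val_stop.
Qed.

Lemma sasaki_sjoin_sorth p q : sasaki (sjoin p (sorth q)) q = sasaki p q.
Proof.
apply/subsp_eqmx/(eqmx_trans (val_sasaki _ _)).
apply: eqmx_trans (cap_eqmx (eqmx_refl _) _) (eqmx_sym (val_sasaki _ _)).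
apply/eqmxP/andP; split; last by rewrite addsmxS // val_sjoin addsmxSl.
rewrite addsmx_sub addsmxSl val_sjoin addsmx_sub addsmxSr val_sorth.
exact: addsmxSl.
Qed.

(* Sasaki projections add nothing to q^⊥: [(p & q) \/ q^⊥ = p \/ q^⊥]. *)
Lemma sle_sasaki_sorth p q r :
  sle (sorth q) (sorth r) -> sle (sasaki p q) (sorth r) -> sle p (sorth r).
Proof.
rewrite /sle val_sasaki !val_sorth => qr pqr.
apply: submx_trans (addsmxSr (val q)^⊥ _) _.
by rewrite -(sasaki_adds_orthmx (val q) (val p)) addsmx_sub pqr.
Qed.

Lemma sasaki_bot p q : sle (sasaki p q) (sbot d) <-> sle p (sorth q).
Proof.
split=> [pq0 | pq].
  apply: sle_sasaki_sorth (sle_refl _) _.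
  by apply: sle_trans pq0 _; rewrite /sle val_sbot sub0mx.
move: pq; rewrite /sle val_sbot val_sasaki val_sorth => pq.
by rewrite -(capmx_orthmx (val q)) capmxS // addsmx_sub submx_refl.
Qed.

Lemma mxrank_val_sasaki p q : (\rank (val (sasaki p q)) <= \rank (val p))%N.
Proof. by rewrite val_sasaki mxrank_sasaki. Qed.

Lemma compatible_orth m1 m2 m3 (A : 'M[C]_(m1, d)) (B : 'M[C]_(m2, d))
    (D : 'M[C]_(m3, d)) p q :
  (A <= B^⊥)%MS -> (A <= D^⊥)%MS -> (B <= D^⊥)%MS ->
  (val p :=: A + B)%MS -> (val q :=: A + D)%MS ->
  compatible p q /\ (val (smeet p q) :=: A)%MS.
Proof.
move=> oAB oAD oBD ep eq.
have oADB : (A + D <= B^⊥)%MS by rewrite addsmx_sub oAB orthmx_sym.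
have meet : (val (smeet p q) :=: A)%MS.
  apply: eqmx_trans (val_smeet p q) _; apply: eqmx_trans (cap_eqmx ep eq) _.
  apply: eqmx_trans (eqmx_sym (matrix_modl B (addsmxSl A D))) _.
  by rewrite capmx_orth //; apply: addsmx0.
split=> //; apply/subsp_eqmx/eqmxP/andP; split; rewrite val_sjoin; last first.
  by rewrite addsmx_sub meet ep addsmxSl val_smeet capmxSl.
rewrite ep addsmx_sub (submx_trans _ (addsmxSl _ _)) ?meet //.
apply: submx_trans _ (addsmxSr _ _).
by rewrite val_smeet sub_capmx ep addsmxSr val_sorth (eqmx_orthmx eq) orthmx_sym.
Qed.

Lemma compatible_sjoin_sorth s q :
  sle s q -> compatible q (sjoin s (sorth q)) /\ smeet q (sjoin s (sorth q)) = s.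
Proof.
rewrite /sle => sq.
suff [compat meet] : compatible q (sjoin s (sorth q)) /\
    (val (smeet q (sjoin s (sorth q))) :=: val s)%MS.
  by split=> //; apply: subsp_eqmx.
apply: (compatible_orth (A := val s) (B := ((val s)^⊥ :&: val q)%MS)
  (D := (val q)^⊥)).
- by rewrite orthmx_sym capmxSl.
- exact: submx_trans sq (submx_orthmxK _).
- exact: submx_trans (capmxSr _ _) (submx_orthmxK _).
- exact: eqmx_sym (adds_capmx_orthmx sq).
- exact: eqmx_trans (val_sjoin _ _) (adds_eqmx (eqmx_refl _) (val_sorth q)).
Qed.

End Subspaces.

Section Unitaries.
Variables (d : nat) (U : unitary d).
Implicit Types p q : subsp d.

Lemma unitary_unit : val U \in unitmx.
Proof. by have [] := mulmx1_unit (eqP (valP U)). Qed.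

Lemma uimg_mono p q : sle p q -> sle (uimg U p) (uimg U q).
Proof. by rewrite /sle !genmxE; apply: submxMr. Qed.

Lemma uinvimg_mono p q : sle p q -> sle (uinvimg U p) (uinvimg U q).
Proof. by rewrite /sle !genmxE; apply: submxMr. Qed.

Lemma uimgK p : uimg U (uinvimg U p) = p.
Proof.
apply/subsp_eqmx/(eqmx_trans (genmxE _))/(eqmx_trans (eqmxMr _ (genmxE _))).
by rewrite -mulmxA -trmx_mul mulmxV ?unitary_unit // trmx1 mulmx1.
Qed.

Lemma uinvimgK p : uinvimg U (uimg U p) = p.
Proof.
apply/subsp_eqmx/(eqmx_trans (genmxE _))/(eqmx_trans (eqmxMr _ (genmxE _))).
by rewrite -mulmxA -trmx_mul mulVmx ?unitary_unit // trmx1 mulmx1.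
Qed.

End Unitaries.

Section StrongMorphism.
Variables (d : nat) (M : Lstruct d) (kappa : M -> subsp d).
Hypothesis kappaP : strong_morphism kappa.

Lemma rel_kappa p x : rel M p x <-> sle (kappa x) p.
Proof. by have [] := kappaP x. Qed.

Lemma kappa_pi q x : kappa (pi_sym M q x) = sasaki (kappa x) q.
Proof. by have [_ []] := kappaP x. Qed.

Lemma kappa_u U x : kappa (u_sym M U x) = uimg U (kappa x).
Proof. by have [_ []] := kappaP x. Qed.

Lemma rel_bot_kappa x : rel M (sbot d) x <-> kappa x = sbot d.
Proof. by rewrite rel_kappa sle_bot. Qed.

Lemma strong_morphism_image_bot :
  (exists x : M, ~ rel M (sbot d) x) <->
  ~ (forall y, (exists m : M, kappa m = y) <-> y = sbot d).
Proof.
split=> [[x /rel_bot_kappa x_nbot] img_bot | img_nbot].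
  by apply/x_nbot/(img_bot (kappa x)); exists x.
apply: NNPP => all_bot; apply: img_nbot => y; split=> [[m <-] | ->].
  by apply/rel_bot_kappa; apply: NNPP => m_nbot; apply: all_bot; exists m.
have [m] := dom_inhabited M; exists m.
by apply/rel_bot_kappa; apply: NNPP => m_nbot; apply: all_bot; exists m.
Qed.

Lemma strong_morphism_PQM_model :
  (exists x : M, ~ rel M (sbot d) x) -> PQM_model M.
Proof.
move=> nbot; split=> //.
split; first by move=> x; apply/rel_kappa/sle_top.
split; first by move=> p q pq x /rel_kappa xp; apply/rel_kappa/(sle_trans xp).
split; first by move=> p q _ x [/rel_kappa xp /rel_kappa xq]; apply/rel_kappa/sle_smeet.
split.
  by move=> p q x /rel_kappa xp; apply/rel_kappa; rewrite kappa_pi; apply: sasaki_mono.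
split.
  move=> p q pq x; rewrite !rel_bot_kappa !kappa_pi => /sle_bot/sasaki_bot pqx.
  by apply/sle_bot/sasaki_bot/(sle_sasaki_sorth (sorth_anti pq)).
split.
  by move=> q x; rewrite rel_bot_kappa kappa_pi rel_kappa => /sle_bot/sasaki_bot.
split.
  by move=> p U x /rel_kappa xp; apply/rel_kappa; rewrite kappa_u; apply: uimg_mono.
move=> p U x /rel_kappa; rewrite kappa_u => Uxp; apply/rel_kappa.
by rewrite -(uinvimgK U (kappa x)); apply: uinvimg_mono.
Qed.

End StrongMorphism.

Local Notation RR := Rdefinitions.R.
Local Notation "x %:C" := (real_complex RR x) (format "x %:C").

Lemma realcD (x y : RR) : (x + y)%:C = x%:C + y%:C. Proof. exact: rmorphD. Qed.
Lemma realcM (x y : RR) : (x * y)%:C = x%:C * y%:C. Proof. exact: rmorphM. Qed.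
Lemma realcN (x : RR) : (- x)%:C = - x%:C. Proof. exact: rmorphN. Qed.
Lemma realc0 : 0%:C = 0. Proof. exact: rmorph0. Qed.
Lemma realc1 : 1%:C = 1. Proof. exact: rmorph1. Qed.
Lemma realcJ (x : RR) : x%:C^* = x%:C. Proof. exact: conjc_real. Qed.

Lemma realc_eq0 (x : RR) : (x%:C == 0) = (x == 0).
Proof. by rewrite -realc0 (inj_eq (@complexI RR)). Qed.

Section InnerProduct.
Variable d : nat.
Implicit Types u v w : 'rV[C]_d.

Definition inner u v : C := (u *m adjmx v) 0 0.

Lemma mulmx_adj_inner u v : (u *m adjmx v == 0) = (inner u v == 0).
Proof.
rewrite /inner; apply/eqP/eqP=> [-> | uv0]; first by rewrite mxE.
by apply/matrixP=> i j; rewrite !ord1 uv0 mxE.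
Qed.

Lemma sub_orthmx_inner u v : (u <= v^⊥)%MS = (inner u v == 0).
Proof. by rewrite sub_kermx mulmx_adj_inner. Qed.

Lemma innerDl u v w : inner (u + v) w = inner u w + inner v w.
Proof. by rewrite /inner mulmxDl mxE. Qed.

Lemma innerDr u v w : inner u (v + w) = inner u v + inner u w.
Proof. by rewrite /inner adjmxD mulmxDr mxE. Qed.

Lemma innerZl a u v : inner (a *: u) v = a * inner u v.
Proof. by rewrite /inner -scalemxAl mxE. Qed.

Lemma innerZr a u v : inner u (a *: v) = a^* * inner u v.
Proof. by rewrite /inner adjmxZ -scalemxAr mxE. Qed.

Lemma innerNl u v : inner (- u) v = - inner u v.
Proof. by rewrite -scaleN1r innerZl mulN1r. Qed.

Lemma innerNr u v : inner u (- v) = - inner u v.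
Proof. by rewrite -scaleN1r innerZr rmorphN1 mulN1r. Qed.

Lemma innerC u v : inner v u = (inner u v)^*.
Proof.
by rewrite /inner -[v *m _]adjmxK adjmxM adjmxK /adjmx !mxE.
Qed.

Lemma inner_self_ge0 u : 0 <= inner u u.
Proof. by rewrite /inner mxE sumr_ge0 // => i _; rewrite !mxE mul_conjC_ge0. Qed.

Lemma inner_self_eq0 u : inner u u = 0 -> u = 0.
Proof. by move=> uu0; apply/orthmx_self_eq0; rewrite sub_orthmx_inner uu0. Qed.

Lemma inner_realcZ k u v : inner (k%:C *: u) (k%:C *: v) = (k * k)%:C * inner u v.
Proof. by rewrite innerZl innerZr realcJ realcM mulrA. Qed.

Lemma inner_self_realc u : exists2 r : RR, inner u u = r%:C & 0 <= r.
Proof.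
have /complex_realP [r ur] := ger0_real (inner_self_ge0 u).
by exists r; rewrite // -ler0c -ur inner_self_ge0.
Qed.

Lemma eqmx_realcZ (k : RR) u : k != 0 -> (k%:C *: u :=: u)%MS.
Proof. by move=> k0; apply: eqmx_scale; rewrite realc_eq0. Qed.

Lemma normalize_row u :
  u != 0 -> exists2 k : RR, k != 0 & inner (k%:C *: u) (k%:C *: u) = 1.
Proof.
move=> u0; have [r ur r0] := inner_self_realc u.
have r_gt0 : 0 < r.
  rewrite lt0r r0 andbT; apply: contraNneq u0 => r_eq0.
  by apply/eqP/inner_self_eq0; rewrite ur r_eq0 realc0.
have sr_gt0 : 0 < Num.sqrt r by rewrite sqrtr_gt0.
exists (Num.sqrt r)^-1; first by rewrite invr_eq0 lt0r_neq0.
rewrite inner_realcZ ur -realcM -realc1; congr (_%:C).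
by rewrite -{3}(sqr_sqrtr r0); field; apply: lt0r_neq0.
Qed.

Definition orthonormal3 x u e :=
  [/\ inner x x = 1, inner u u = 1 & inner e e = 1] /\
  [/\ inner x u = 0, inner x e = 0 & inner u e = 0].

Definition comb x u e (a b g : RR) : 'rV[C]_d := a%:C *: x + b%:C *: u + g%:C *: e.

Lemma inner_comb x u e a b g a' b' g' : orthonormal3 x u e ->
  inner (comb x u e a b g) (comb x u e a' b' g') = (a * a' + b * b' + g * g')%:C.
Proof.
case=> [[xx uu ee] [xu xe ue]].
have [ux ex eu] : [/\ inner u x = 0, inner e x = 0 & inner e u = 0].
  by rewrite (innerC x u) (innerC x e) (innerC u e) xu xe ue conjC0.
rewrite /comb !innerDl !innerDr !innerZl !innerZr !realcJ xx uu ee xu xe ue ux ex eu.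
by rewrite !realcD !realcM; ring.
Qed.

Lemma comb_lin x u e k k' a b g a' b' g' :
  k%:C *: comb x u e a b g + k'%:C *: comb x u e a' b' g' =
  comb x u e (k * a + k' * a') (k * b + k' * b') (k * g + k' * g').
Proof.
rewrite /comb !scalerDr !scalerA -!realcM !realcD !scalerDl.
by rewrite addrACA [X in X + _]addrACA.
Qed.

Lemma comb_scale x u e k a b g :
  k%:C *: comb x u e a b g = comb x u e (k * a) (k * b) (k * g).
Proof. by rewrite /comb !scalerDr !scalerA -!realcM. Qed.

Lemma comb_x x u e : comb x u e 1 0 0 = x.
Proof. by rewrite /comb realc1 realc0 !scale0r !addr0 scale1r. Qed.

Definition unit_pair x y (c : RR) :=
  [/\ inner x x = 1, inner y y = 1 & inner x y = c%:C].

(* Gram-Schmidt on [x, y], completed by a unit vector orthogonal to both. *)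
Lemma unit_pair_frame x y c : (3 <= d)%N -> unit_pair x y c -> 0 <= c -> c < 1 ->
  exists u e s, [/\ orthonormal3 x u e, 0 < s, s ^+ 2 = 1 - c ^+ 2
                  & y = comb x u e c s 0].
Proof.
move=> d3 [xx yy xy] c0 c1.
set s := Num.sqrt (1 - c^+2).
have s2_gt0 : 0 < 1 - c^+2 by nra.
have s2 : s^+2 = 1 - c^+2 by rewrite sqr_sqrtr // ltW.
have s_gt0 : 0 < s by rewrite sqrtr_gt0.
have yx : inner y x = c%:C by rewrite innerC xy realcJ.
set u := s^-1%:C *: (y - c%:C *: x).
have xu : inner x u = 0.
  by rewrite /u innerZr innerDr innerNr innerZr !realcJ xy xx mulr1 subrr mulr0.
have uu : inner u u = 1.
  rewrite /u inner_realcZ !innerDl !innerDr !innerNl !innerNr !innerZl !innerZr.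
  rewrite realcJ xx yy xy yx -realc1 -!realcM -!realcN -!realcD -realcM; congr (_%:C).
  by rewrite mulr1 -(expr2 c) -s2; field; apply: lt0r_neq0.
have [e0 e0_0 e0_orth] : exists2 e0 : 'rV[C]_d, e0 != 0 & (e0 <= (col_mx x y)^⊥)%MS.
  exists (nz_row (col_mx x y)^⊥); last exact: nz_row_sub.
  rewrite nz_row_eq0 -mxrank_eq0 mxrank_orthmx -lt0n subn_gt0.
  exact: leq_ltn_trans (rank_leq_row _) d3.
have [e0x e0y] : inner x e0 = 0 /\ inner y e0 = 0.
  move: e0_orth; rewrite sub_kermx adjmx_col_mx mul_mx_row row_mx_eq0.
  rewrite !mulmx_adj_inner => /andP[/eqP e0x /eqP e0y].
  by rewrite (innerC e0 x) (innerC e0 y) e0x e0y conjC0.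
have [k k0 ee] := normalize_row e0_0.
exists u, (k%:C *: e0), s; split=> //.
  split; split=> //; first by rewrite innerZr e0x mulr0.
  by rewrite /u innerZl innerZr innerDl innerNl innerZl e0x e0y mulr0 subrr !mulr0.
rewrite /comb realc0 scale0r addr0 /u scalerA -realcM divff ?lt0r_neq0 // realc1.
by rewrite scale1r addrC subrK.
Qed.

Lemma inner_unit_pair_sub x y c : unit_pair x y c ->
  inner (y - c%:C *: x) (y - c%:C *: x) = (1 - c ^+ 2)%:C.
Proof.
case=> xx yy xy; have yx : inner y x = c%:C by rewrite innerC xy realcJ.
rewrite !innerDl !innerDr !innerNl !innerNr !innerZl !innerZr !realcJ xx yy xy yx.
by rewrite -realc1 -!realcM -!realcN -!realcD; congr (_%:C); ring.
Qed.

Lemma unit_pair_of_independent v w : v != 0 -> w != 0 -> ~~ (v <= w)%MS ->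
  exists x y c, [/\ (x :=: v)%MS, (y :=: w)%MS, unit_pair x y c, 0 <= c & c < 1].
Proof.
move=> v0 w0 vw.
have [k k0 xx] := normalize_row v0; set x0 := k%:C *: v in xx.
have [k' k'0 yy] := normalize_row w0; set y := k'%:C *: w in yy.
set z := inner x0 y.
(* Rotating [x0] by the phase of [z] makes the inner product real and nonnegative. *)
have [lam lam1 xy] : exists2 lam : C, `|lam| = 1 & inner (lam *: x0) y = `|z|.
  have [z0 | z0] := eqVneq z 0; first by exists 1; rewrite ?normr1 // scale1r z0 normr0.
  have nz0 : `|z| != 0 by rewrite normr_eq0.
  exists (z^* / `|z|); first by rewrite normf_div norm_conjC normr_id divff.
  by rewrite innerZl -/z mulrAC -normCKC expr2 mulfK.
have [c zc] : exists c : RR, `|z| = c%:C by apply/complex_realP/normr_real.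
have c0 : 0 <= c by rewrite -ler0c -zc normr_ge0.
set x := lam *: x0.
have xyc : unit_pair x y c.
  split=> //; last by rewrite xy zc.
  by rewrite innerZl innerZr xx mulr1 -normCK lam1 expr1n.
have lam0 : lam != 0 by rewrite -normr_eq0 lam1 oner_eq0.
have ex : (x :=: v)%MS := eqmx_trans (eqmx_scale _ lam0) (eqmx_realcZ _ k0).
exists x, y, c; split=> //; first exact: eqmx_realcZ.
have := inner_self_ge0 (y - c%:C *: x); rewrite inner_unit_pair_sub // ler0c.
rewrite lt_neqAle => c2; apply/andP; split; last by nra.
apply: contraNneq vw => c1; move: (inner_unit_pair_sub xyc).
rewrite c1 expr1n subrr realc0 => /inner_self_eq0/eqP; rewrite realc1 scale1r subr_eq0.
by move=> /eqP yx; rewrite -ex -yx eqmx_realcZ.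
Qed.

End InnerProduct.

Lemma eq_of_lincomb (x y z1 z2 k1 k2 : RR) :
  z1 = 0 -> z2 = 0 -> x - y = k1 * z1 + k2 * z2 -> x = y.
Proof. by move=> -> -> /eqP; rewrite !mulr0 addr0 subr_eq0 => /eqP. Qed.

Lemma step_params (c s : RR) : 0 <= c -> c < 1 -> 0 < s -> s ^+ 2 = 1 - c ^+ 2 ->
  exists a b g : RR, [/\ a ^+ 2 + b ^+ 2 + g ^+ 2 = 1, c * (1 - a ^+ 2) = s * a * b,
    g != 0 & 1 - 2 * g ^+ 2 = (3 * c - 1) / (1 + c)].
Proof.
move=> c0 c1 s_gt0 s2; have c1_gt0 : 0 < 1 + c by lra.
set a := Num.sqrt c; set b := s * a / (1 + c).
set g := Num.sqrt ((1 - c) / (1 + c)).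
have a2 : a ^+ 2 = c by rewrite sqr_sqrtr.
have g2 : g ^+ 2 = (1 - c) / (1 + c) by rewrite sqr_sqrtr // divr_ge0 //; lra.
exists a, b, g; split.
- by rewrite /b expr_div_n !exprMn s2 a2 g2; field; apply: lt0r_neq0.
- have -> : s * a * b = s ^+ 2 * a ^+ 2 / (1 + c) by rewrite /b; field; apply: lt0r_neq0.
  by rewrite s2 a2; field; apply: lt0r_neq0.
- by rewrite lt0r_neq0 // sqrtr_gt0 divr_gt0 //; lra.
- by rewrite g2; field; apply: lt0r_neq0.
Qed.

(* With [b = t a] and [g^2 = 1/2] the two constraints reduce to
   [2 c t^2 - s t + c = 0], whose discriminant [s^2 - 8 c^2] is >= 0 iff c <= 1/3. *)
Lemma small_params (c s : RR) : 0 < c -> c <= 1 / 3 -> 0 < s -> s ^+ 2 = 1 - c ^+ 2 ->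
  exists a b g : RR, [/\ a ^+ 2 + b ^+ 2 + g ^+ 2 = 1, c * (1 - a ^+ 2) = s * a * b,
    g != 0 & g ^+ 2 = 1 / 2].
Proof.
move=> c_gt0 c13 s_gt0 s2.
have disc_ge0 : 0 <= s ^+ 2 - 8 * c ^+ 2 by rewrite s2; nra.
set r := Num.sqrt (s ^+ 2 - 8 * c ^+ 2).
have r2 : r ^+ 2 = s ^+ 2 - 8 * c ^+ 2 by rewrite sqr_sqrtr.
have rs : r <= s.
  rewrite -(ger0_norm (ltW s_gt0)) -sqrtr_sqr ler_sqrt ?sqr_ge0 //; nra.
set t := (s - r) / (4 * c).
have t0 : 0 <= t by apply: divr_ge0; lra.
have root_t : 2 * c * t ^+ 2 - s * t + c = 0.
  have -> : 2 * c * t ^+ 2 - s * t + c = (r ^+ 2 - (s ^+ 2 - 8 * c ^+ 2)) / (8 * c).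
    by rewrite /t; field; apply: lt0r_neq0.
  by rewrite r2 subrr mul0r.
set cst := c + s * t.
have cst_gt0 : 0 < cst by rewrite /cst; nra.
set a := Num.sqrt (c / cst); set b := t * a; set g := Num.sqrt (1 / 2 : RR).
have a2 : a ^+ 2 = c / cst by rewrite sqr_sqrtr // divr_ge0 // ltW.
have g2 : g ^+ 2 = 1 / 2 by rewrite sqr_sqrtr //; lra.
have ab : a ^+ 2 + b ^+ 2 = 1 / 2.
  rewrite /b exprMn a2.
  have -> : c / cst + t ^+ 2 * (c / cst) =
      1 / 2 + (2 * c * t ^+ 2 - s * t + c) / (2 * cst).
    by rewrite /cst; field; rewrite -/cst; apply: lt0r_neq0.
  by rewrite root_t mul0r addr0.
exists a, b, g; split=> //.
- by rewrite ab g2; lra.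
- have -> : s * a * b = s * t * a ^+ 2 by rewrite /b; ring.
  by rewrite a2 /cst; field; rewrite -/cst; apply: lt0r_neq0.
- by rewrite lt0r_neq0 // sqrtr_gt0; lra.
Qed.

Section RayFilter.
Variables (d : nat) (F : subsp d -> Prop).
Hypothesis F_up : forall p q, sle p q -> F p -> F q.
Hypothesis F_meet : forall p q, compatible p q -> F p -> F q -> F (smeet p q).

Lemma F_mxspan m n (A : 'M[C]_(m, d)) (B : 'M[C]_(n, d)) :
  (A <= B)%MS -> F (mxspan A) -> F (mxspan B).
Proof. by move=> AB; apply: F_up; rewrite /sle !val_mxspan. Qed.

Lemma F_common_line (l b g X Y : 'rV[C]_d) :
  inner l b = 0 -> inner l g = 0 -> inner b g = 0 ->
  (X <= l + b)%MS -> (Y <= l + g)%MS -> F (mxspan X) -> F (mxspan Y) -> F (mxspan l).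
Proof.
move=> lb lg bg Xlb Ylg /(F_mxspan Xlb) Flb /(F_mxspan Ylg) Flg.
have [||| compat meet] := @compatible_orth _ _ _ _ l b g (mxspan (l + b)%MS)
    (mxspan (l + g)%MS) _ _ _ (val_mxspan _) (val_mxspan _).
- by rewrite sub_orthmx_inner lb.
- by rewrite sub_orthmx_inner lg.
- by rewrite sub_orthmx_inner bg.
by apply: F_up _ (F_meet compat Flb Flg); rewrite /sle meet val_mxspan.
Qed.

Lemma F_orth_lines_bot (x y : 'rV[C]_d) :
  inner x y = 0 -> F (mxspan x) -> F (mxspan y) -> F (sbot d).
Proof.
move=> xy Fx Fy; have inner0 (v : 'rV[C]_d) : inner 0 v = 0.
  by rewrite /inner mul0mx mxE.
by rewrite -(mxspan0 d 1); apply: (F_common_line (inner0 x) (inner0 y) xy);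
  rewrite ?adds0mx.
Qed.

Section Frame.
Variables (x u e : 'rV[C]_d) (c s : RR).
Hypotheses (xue : orthonormal3 x u e) (s0 : s != 0).
Hypotheses (Fx : F (mxspan x)) (Fy : F (mxspan (comb x u e c s 0))).

(* The line [comb a b g] is the common line of the planes [x, nx] and [y, ny];
   the two constraints on (a, b, g) make the three vectors pairwise orthogonal. *)
Lemma F_comb a b g : a ^+ 2 + b ^+ 2 + g ^+ 2 = 1 -> c * (1 - a ^+ 2) = s * a * b ->
  g != 0 -> F (mxspan (comb x u e a b g)).
Proof.
move=> /eqP; rewrite -subr_eq0 => /eqP n1 /eqP; rewrite -subr_eq0 => /eqP n2 g0.
set l := comb x u e a b g.
set nx := comb x u e (s * g) (- (c * g)) (c * b - s * a).
set ny := comb x u e 0 (- g) b.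
have lnx : inner l nx = 0 by rewrite inner_comb // -realc0; congr (_%:C); ring.
have lny : inner l ny = 0 by rewrite inner_comb // -realc0; congr (_%:C); ring.
have nxny : inner nx ny = 0.
  rewrite inner_comb // -realc0; congr (_%:C).
  by apply: (eq_of_lincomb (k1 := c) (k2 := 1) n1 n2); ring.
apply: (F_common_line lnx lny nxny _ _ Fx Fy).
  have sg0 : s * g != 0 by rewrite mulf_neq0.
  rewrite -(eqmx_realcZ x sg0) -[in X in (X <= _)%MS](comb_x x u e) comb_scale.
  have -> : comb x u e (s * g * 1) (s * g * 0) (s * g * 0) =
      (a * s * g)%:C *: l + (1 - a^+2)%:C *: nx.
    rewrite comb_lin; congr (comb _ _ _ _ _ _); first by ring.
      by apply: (eq_of_lincomb (k1 := 0) (k2 := g) n1 n2); ring.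
    by apply: (eq_of_lincomb (k1 := - (a * s)) (k2 := - b) n1 n2); ring.
  by apply: addmx_sub_adds; apply: scalemx_sub.
rewrite -(eqmx_realcZ _ g0) comb_scale.
have -> : comb x u e (g * c) (g * s) (g * 0) =
    ((c * a + s * b) * g)%:C *: l + ((c * a + s * b) * b - s)%:C *: ny.
  rewrite comb_lin; congr (comb _ _ _ _ _ _); last 1 first.
  - by apply: (eq_of_lincomb (k1 := - (c * a + s * b)) (k2 := - a) n1 n2); ring.
  - by apply: (eq_of_lincomb (k1 := 0) (k2 := g) n1 n2); ring.
  - by ring.
by apply: addmx_sub_adds; apply: scalemx_sub.
Qed.

Lemma F_comb_pm a b g : a ^+ 2 + b ^+ 2 + g ^+ 2 = 1 -> c * (1 - a ^+ 2) = s * a * b ->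
  g != 0 -> [/\ F (mxspan (comb x u e a b g)), F (mxspan (comb x u e a b (- g)))
  & inner (comb x u e a b g) (comb x u e a b (- g)) = (1 - 2 * g ^+ 2)%:C].
Proof.
move=> norm1 cs g0; split; first exact: F_comb.
- by apply: F_comb; rewrite ?sqrrN ?oppr_eq0.
rewrite inner_comb //; congr (_%:C).
have -> : 1 - 2 * g ^+ 2 = a ^+ 2 + b ^+ 2 + g ^+ 2 - 2 * g ^+ 2 by rewrite norm1.
by ring.
Qed.

End Frame.

Hypothesis d3 : (3 <= d)%N.

Lemma F_unit_pair_step x y c : unit_pair x y c -> 1 / 3 < c -> c < 1 ->
  F (mxspan x) -> F (mxspan y) -> exists x' y',
  [/\ unit_pair x' y' ((3 * c - 1) / (1 + c)), F (mxspan x') & F (mxspan y')].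
Proof.
move=> xy c13 c1 Fx Fy; have c0 : 0 <= c by lra.
have [u [e [s [xue s_gt0 s2 ey]]]] := unit_pair_frame d3 xy c0 c1.
rewrite ey in Fy; have [a [b [g [norm1 cs g0 g2]]]] := step_params c0 c1 s_gt0 s2.
have [Fx' Fy' x'y'] := F_comb_pm xue (lt0r_neq0 s_gt0) Fx Fy norm1 cs g0.
exists (comb x u e a b g), (comb x u e a b (- g)); split=> //; split.
- by rewrite inner_comb // -!expr2 norm1 realc1.
- by rewrite inner_comb // -!expr2 sqrrN norm1 realc1.
- by rewrite x'y' g2.
Qed.

Lemma F_unit_pair_bot_small x y c : unit_pair x y c -> 0 <= c -> c <= 1 / 3 ->
  F (mxspan x) -> F (mxspan y) -> F (sbot d).
Proof.
move=> xy c0 c13 Fx Fy.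
have [c_eq0 | c_neq0] := eqVneq c 0.
  by case: xy => _ _ xy; apply: F_orth_lines_bot Fx Fy; rewrite xy c_eq0 realc0.
have c_gt0 : 0 < c by rewrite lt0r c_neq0.
have [u [e [s [xue s_gt0 s2 ey]]]] := unit_pair_frame d3 xy c0 (ltac:(lra) : c < 1).
rewrite ey in Fy; have [a [b [g [norm1 cs g0 g2]]]] := small_params c_gt0 c13 s_gt0 s2.
have [Fx' Fy' x'y'] := F_comb_pm xue (lt0r_neq0 s_gt0) Fx Fy norm1 cs g0.
by apply: F_orth_lines_bot Fx' Fy'; rewrite x'y' g2 -realc0; congr (_%:C); lra.
Qed.

(* Each step lowers c by (1 - c)^2 / (1 + c) >= (1 - c0)^2 / 2. *)
Lemma F_unit_pair_bot c0 n x y c : c0 < 1 -> unit_pair x y c -> 0 <= c -> c <= c0 ->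
  c <= n%:R * ((1 - c0) ^+ 2 / 2) -> F (mxspan x) -> F (mxspan y) -> F (sbot d).
Proof.
move=> c01; elim: n x y c => [|n IH] x y c xy c_ge0 cc0 cn Fx Fy.
  by apply: F_unit_pair_bot_small xy c_ge0 _ Fx Fy; rewrite mul0r in cn; lra.
have [c13 | c13] := lerP c (1 / 3).
  exact: F_unit_pair_bot_small xy c_ge0 c13 Fx Fy.
have c1 : c < 1 by lra.
have [x' [y' [x'y' Fx' Fy']]] := F_unit_pair_step xy c13 c1 Fx Fy.
have c1_gt0 : 0 < 1 + c by lra.
apply: (IH _ _ _ x'y' _ _ _ Fx' Fy').
- by apply: divr_ge0; lra.
- by rewrite ler_pdivrMr //; nra.
rewrite ler_pdivrMr //; move: cn; rewrite -addn1 natrD mulrDl mul1r.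
set δ := (1 - c0) ^+ 2 / 2 => cn.
have δ2 : δ * 2 <= (1 - c) ^+ 2 by rewrite /δ divfK //; nra.
have δ_ge0 : 0 <= δ by apply: divr_ge0; [apply: sqr_ge0 | lra].
have : 0 <= δ * (1 - c) by apply: mulr_ge0; lra.
have : (c - δ) * (1 + c) <= n%:R * δ * (1 + c) by rewrite ler_pM2r //; lra.
nra.
Qed.

Lemma F_lines_bot (v w : 'rV[C]_d) : v != 0 -> ~~ (v <= w)%MS ->
  F (mxspan v) -> F (mxspan w) -> F (sbot d).
Proof.
move=> v0 vw Fv Fw; have [w0 | w0] := eqVneq w 0; first by rewrite -(mxspan0 d 1) -w0.
have [x [y [c [xv yw xy c0 c1]]]] := unit_pair_of_independent v0 w0 vw.
have δ_gt0 : 0 < (1 - c) ^+ 2 / 2 by rewrite divr_gt0 // exprn_gt0 // subr_gt0.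
have /ltW := archi_boundP (divr_ge0 c0 (ltW δ_gt0)); rewrite ler_pdivrMr // => cn.
apply: (F_unit_pair_bot c1 xy c0 (lexx c) cn).
- by apply: F_mxspan Fv; rewrite xv.
- by apply: F_mxspan Fw; rewrite yw.
Qed.

End RayFilter.

Lemma ex_minimizer (T : Type) (P : T -> Prop) (f : T -> nat) :
  (exists x, P x) -> exists2 x, P x & forall y, P y -> (f x <= f y)%N.
Proof.
case=> x Px; move: {2}(f x) (leqnn (f x)) => n; elim: n x Px => [|n IH] x Px fx.
  by exists x => // y _; move: fx; rewrite leqn0 => /eqP ->.
have [[y Py fyx] | no_lt] := classic (exists2 y, P y & (f y < f x)%N).
  by apply: IH Py _; rewrite -ltnS (leq_trans fyx).
by exists x => // y Py; rewrite leqNgt; apply/negP => fyx; apply: no_lt; exists y.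
Qed.

Section PQMModel.
Variables (d : nat) (M : Lstruct d).
Hypothesis d3 : (3 <= d)%N.
Hypothesis rel_top : forall x : M, rel M (stop d) x.
Hypothesis rel_le : forall p q, sle p q -> forall x : M, rel M p x -> rel M q x.
Hypothesis rel_meet : forall p q, compatible p q ->
  forall x : M, rel M p x /\ rel M q x -> rel M (smeet p q) x.
Hypothesis rel_pi : forall p q (x : M), rel M p x -> rel M (sasaki p q) (pi_sym M q x).
Hypothesis rel_pi_compat : forall p q, sle p q -> forall x : M,
  rel M (sbot d) (pi_sym M p (pi_sym M q x)) -> rel M (sbot d) (pi_sym M p x).
Hypothesis rel_pi_bot :
  forall q (x : M), rel M (sbot d) (pi_sym M q x) -> rel M (sorth q) x.
Hypothesis rel_u : forall p U (x : M), rel M p x -> rel M (uimg U p) (u_sym M U x).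
Hypothesis rel_u_inv :
  forall p U (x : M), rel M p (u_sym M U x) -> rel M (uinvimg U p) x.

(* Apply [pi_(r^⊥)] to reach [bot], drop [pi_p] by (pi_c) as [r^⊥ <= p], and
   conclude by (pi_bot) since [r^⊥^⊥ = r]. *)
Lemma rel_of_pi p r x : sle (sorth p) r -> rel M r (pi_sym M p x) -> rel M r x.
Proof.
move=> pr xr; have rp : sle (sorth r) p by have := sorth_anti pr; rewrite sorthK.
apply: rel_le (sle_refl _) _ _; rewrite -(sorthK r); apply: rel_pi_bot.
apply: rel_pi_compat rp _ _; apply: rel_le (rel_pi (sorth r) xr).
by apply/sasaki_bot; rewrite sorthK; apply: sle_refl.
Qed.

Lemma rel_sasaki p q x : rel M p x -> rel M q x -> rel M (sasaki p q) x.
Proof.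
move=> xp xq; have [compat <-] := compatible_sjoin_sorth (sasaki_le p q).
apply: (rel_meet compat); split=> //; apply: (rel_of_pi (p := q)).
  by rewrite /sle val_sjoin addsmxSr.
by apply: rel_le (rel_pi q xp); rewrite /sle val_sjoin addsmxSl.
Qed.

Lemma rel_line_bot y (v : 'rV[C]_d) r : v != 0 -> ~~ (v <= val r)%MS ->
  rel M (mxspan v) y -> rel M r y -> rel M (sbot d) y.
Proof.
move=> v0 vr yv yr; set s := sasaki (mxspan v) r.
have ys : rel M s y := rel_sasaki yv yr.
have [s0 | s_nz] := eqVneq (val s) 0.
  by apply: rel_le ys; rewrite /sle s0 sub0mx.
set u := nz_row (val s); have us : (u <= val s)%MS := nz_row_sub _.
have s_rank : (\rank (val s) <= 1)%N.
  by apply: leq_trans (mxrank_val_sasaki _ _) _; rewrite val_mxspan rank_rV leq_b1.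
have su : (val s <= u)%MS.
  by rewrite -(mxrank_leqif_sup us).2 eqn_leq mxrankS // rank_rV nz_row_eq0 s_nz.
apply: (@F_lines_bot _ (rel M^~ y) _ _ d3 _ u v0 _ yv).
- by move=> p q pq; apply: rel_le.
- by move=> p q pq yp yq; apply: rel_meet.
- apply: contra vr => vu; apply: submx_trans vu (submx_trans us _).
  exact: sasaki_le.
- by apply: rel_le ys; rewrite /sle val_mxspan.
Qed.

Lemma min_rank_rel_le x a : rel M a x ->
  (forall b, rel M b x -> (\rank (val a) <= \rank (val b))%N) ->
  forall c, rel M c x -> sle a c.
Proof.
move=> xa a_min c xc; apply/negPn/negP => ac.
have [v [va v_orth v0]] := exists_orth_line ac.
set q := sjoin (mxspan v) (sorth a).
have vq : (v <= val q)%MS.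
  by rewrite val_sjoin; apply: submx_trans _ (addsmxSl _ _); rewrite val_mxspan.
have aq : ((val a)^⊥ <= val q)%MS.
  rewrite val_sjoin; apply: submx_trans _ (addsmxSr _ _).
  by rewrite val_sorth; apply: submx_refl.
have q_va : (val q <= v + (val a)^⊥)%MS.
  by rewrite val_sjoin addsmx_sub val_mxspan addsmxSl val_sorth addsmxSr.
have q'x : ~ rel M (sorth q) x.
  by move=> /a_min; rewrite leqNgt val_sorth (mxrank_orthmxQ_lt va v0 vq aq).
apply/q'x/rel_pi_bot; apply: (rel_line_bot v0 _ _ (rel_pi q xc)).
  by rewrite val_sasaki; apply: (line_notin_sasaki va v_orth v0 vq aq).
apply: rel_le (rel_pi q xa); rewrite /sle val_mxspan val_sasaki.
exact: (sasaki_sub_line va aq q_va).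
Qed.

Lemma exists_least_rel x : exists a, forall p, rel M p x <-> sle a p.
Proof.
have [a xa a_min] :=
  ex_minimizer (fun a => \rank (val a)) (ex_intro (rel M^~ x) _ (rel_top x)).
by exists a => p; split=> [/(min_rank_rel_le xa a_min) | /rel_le]; last exact.
Qed.

Section Least.
Variable kappa : M -> subsp d.
Hypothesis kappaP : forall x p, rel M p x <-> sle (kappa x) p.

Lemma rel_kappa_self x : rel M (kappa x) x.
Proof. exact/kappaP/sle_refl. Qed.

Lemma kappa_pi_sym q x : kappa (pi_sym M q x) = sasaki (kappa x) q.
Proof.
apply: sle_antisym; first by apply/kappaP/rel_pi/rel_kappa_self.
set b := kappa (pi_sym M q x).
have bq : sle b q by apply/kappaP; rewrite -{1}(sasaki_top q); apply/rel_pi/rel_top.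
have /kappaP x_bq : rel M (sjoin b (sorth q)) x.
  apply: (rel_of_pi (p := q)); first by rewrite /sle val_sjoin addsmxSr.
  by apply: rel_le (rel_kappa_self _); rewrite /sle val_sjoin addsmxSl.
by rewrite -(sasaki_id bq) -(sasaki_sjoin_sorth b q); apply: sasaki_mono.
Qed.

Lemma kappa_u_sym U x : kappa (u_sym M U x) = uimg U (kappa x).
Proof.
apply: sle_antisym; first by apply/kappaP/rel_u/rel_kappa_self.
rewrite -[kappa (u_sym M U x)](uimgK U); apply: uimg_mono.
by apply/kappaP/rel_u_inv/rel_kappa_self.
Qed.

End Least.

Lemma exists_strong_morphism : exists kappa : M -> subsp d, strong_morphism kappa.
Proof.
have [kappa kappaP] := ClassicalEpsilon.choice _ exists_least_rel.
exists kappa => x; split; first exact: kappaP.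
by split=> [q | U]; [apply: kappa_pi_sym | apply: kappa_u_sym].
Qed.

End PQMModel.

Local Close Scope ring_scope.

Theorem mainTheorem15 (d : nat) (Hd : 3 <= d) (M : Lstruct d) :
  PQM_model M <->
  exists kappa : M -> subsp d,
    strong_morphism kappa /\
    (* kappa(M) <> {bot} *)
    ~ (forall y : subsp d, (exists m : M, kappa m = y) <-> y = sbot d).
Proof.
split=> [model | [kappa [kappaP img_nbot]]].
  have [nbot [top [le [meet [pi [pic [pib [u ue]]]]]]]] := model.
  have [kappa kappaP] := exists_strong_morphism Hd top le meet pi pic pib u ue.
  by exists kappa; split=> //; apply/(strong_morphism_image_bot kappaP).
exact/(strong_morphism_PQM_model kappaP)/(strong_morphism_image_bot kappaP).
Qed.
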